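(* Let $r\in\mathbb{N}$ and let $G$ be a countable graph with infinitely many connected components. Then $\mathrm{Rd}_r(G)\ge 1/r$.
   Context: $K_{\mathbb{N}}$ is the complete graph on $\mathbb{N}=\{1,2,\dots\}$; a copy of $G$ is a subgraph of $K_\mathbb{N}$ isomorphic to $G$, monochromatic if all its edges have the same color. $\overline{d}(V)=\limsup_{t\to\infty}|V\cap\{1,\dots,t\}|/t$. For an $r$-coloring $\varphi$ of the edges of $K_\mathbb{N}$, $\mathrm{Rd}_\varphi(G)$ is the supremum of upper densities of monochromatic copies of $G$; $\mathrm{Rd}_r(G)=\inf_\varphi \mathrm{Rd}_\varphi(G)$ over all $r$-colorings. *)

From mathcomp Require Import all_boot all_order all_algebra.
From mathcomp Require Import all_classical all_reals all_analysis.
Set Implicit Arguments. Unset Strict Implicit. Unset Printing Implicit Defensive.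
Import Order.TTheory GRing.Theory Num.Theory.
Local Open Scope classical_set_scope.
Local Open Scope ring_scope.

Definition simple_graph (V : Type) (e : V -> V -> bool) : Prop :=
  (forall u v, e u v = e v u) /\ (forall v, ~~ e v v).

Inductive gconnected (V : Type) (e : V -> V -> bool) : V -> V -> Prop :=
| gconn_refl v : gconnected e v v
| gconn_step u v w : e u v -> gconnected e v w -> gconnected e u w.

Definition components (V : Type) (e : V -> V -> bool) : set (set V) :=
  [set C | exists v, C = [set w | gconnected e v w]].

(* An r-colouring of the edges of K_N (N = {1,2,...}): a symmetric
   colour function on pairs of distinct positive integers. Values on 0 or
   on the diagonal are irrelevant. *)
Definition edge_colouring (r : nat) (phi : nat -> nat -> 'I_r) : Prop :=
  forall x y, (0 < x)%N -> (0 < y)%N -> x != y -> phi x y = phi y x.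

(* A copy of G = (V, e) in K_N is given by an injective map f : V -> N; the
   copy is the subgraph with vertex set f(V) and edges {f u, f v}, e u v. *)
Definition is_copy (V : Type) (e : V -> V -> bool) (f : V -> nat) : Prop :=
  injective f /\ (forall v, (0 < f v)%N).

Definition monochromatic (V : Type) (e : V -> V -> bool) (r : nat)
  (phi : nat -> nat -> 'I_r) (f : V -> nat) : Prop :=
  exists c : 'I_r, forall u v, e u v -> phi (f u) (f v) = c.

Definition upper_density (R : realType) (W : set nat) : \bar R :=
  limn_esup (fun t : nat =>
    (((\sum_(1 <= i < t.+1) (if `[< W i >] then 1 else 0))%N)%:R
       / t%:R : R)%:E).

Definition Rd_phi (R : realType) (V : Type) (e : V -> V -> bool) (r : nat)
  (phi : nat -> nat -> 'I_r) : \bar R :=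
  ereal_sup [set d | exists f : V -> nat,
     [/\ is_copy e f, monochromatic e phi f & d = upper_density R (range f)]].

Definition Rd (R : realType) (V : Type) (e : V -> V -> bool) (r : nat) : \bar R :=
  ereal_inf [set Rd_phi R e phi | phi in edge_colouring (r := r)].

From mathcomp Require Import all_boot all_order all_algebra.
From mathcomp Require Import all_classical all_reals all_analysis.
From mathcomp Require Import zify ring lra.
Import Order.TTheory GRing.Theory Num.Theory.
Set Implicit Arguments. Unset Strict Implicit. Unset Printing Implicit Defensive.
Local Open Scope classical_set_scope.

(* Fix an r-colouring phi of K_N.  By the infinite Ramsey theorem almost every
   positive integer lies in an infinite monochromatic clique ("is good" for
   some colour).  For each colour c we select, inside those cliques, pairwise
   disjoint infinite tails T w (one for each c-good w) whose union S c has
   density zero.  The c-good integers outside S c, over all colours, cover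
   almost all of N, so for one colour c they form a set W of upper density
   at least 1/r.  Each {w} u T w (w in W) is then a c-clique, and these
   cliques are disjoint: mapping the components of G bijectively onto W
   (both are countably infinite), each component's leader to its
   root w and its other vertices into T w gives a c-monochromatic copy of G
   whose vertex set contains W. *)

Section UnboundedSets.
Local Open Scope nat_scope.

Definition unbounded (A : set nat) := forall b, exists x, A x /\ b <= x.

Lemma not_unboundedP (A : set nat) :
  ~ unbounded A -> exists b, forall x, A x -> x < b.
Proof.
move=> nA; apply: contrapT => nb; apply: nA => b; apply: contrapT => nx.
apply: nb; exists b => x Ax; rewrite ltnNge; apply/negP => bx.
by apply: nx; exists x.
Qed.

Lemma finite_bounded (A : set nat) :
  finite_set A -> exists b, forall x, A x -> x < b.
Proof.
move=> /finite_seqP [s ->]; exists (\max_(x <- s) x).+1 => x /= xs.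
by rewrite ltnS; apply: (leq_bigmax_seq (F := id)) xs _.
Qed.

Lemma unbounded_infinite (A : set nat) : unbounded A -> infinite_set A.
Proof.
move=> uA /finite_bounded [b Hb]; have [x [Ax bx]] := uA b.
by have := Hb x Ax; rewrite ltnNge bx.
Qed.

Lemma unbounded_enum (A : set nat) :
  unbounded A -> exists g : nat -> nat, (forall n, A (g n)) /\ injective g.
Proof.
move=> /unbounded_infinite /infiniteP /pcard_leP [h].
exists h; split => [n | m n]; first exact: funS.
by apply: inj; rewrite in_setE.
Qed.

Definition above (A : set nat) b := xget 0 [set x | A x /\ b <= x].

Lemma aboveP A b : unbounded A -> A (above A b) /\ b <= above A b.
Proof.
by move=> uA; apply: (@xgetPex _ 0 [set x | A x /\ b <= x]); exact: uA.
Qed.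

Lemma unboundedT : unbounded setT.
Proof. by move=> b; exists b. Qed.

Lemma unbounded_colour_class r (Y : set nat) (g : nat -> 'I_r) :
  unbounded Y -> exists c, unbounded [set y | Y y /\ g y = c].
Proof.
move=> uY; apply: contrapT => nc.
have /choice [B HB] : forall c, exists b, forall y, Y y /\ g y = c -> y < b.
  by move=> c; apply: not_unboundedP => uc; apply: nc; exists c.
have [y [Yy By]] := uY (\max_(c : 'I_r) B c).
have := leq_trans (HB (g y) y (conj Yy erefl)) (leq_trans (leq_bigmax _) By).
by rewrite ltnn.
Qed.

End UnboundedSets.

Section InfiniteRamsey.
Local Open Scope nat_scope.
Variables (r : nat) (phi : nat -> nat -> 'I_r).
Hypothesis phi_sym : edge_colouring phi.

Definition clique c (Q : set nat) :=
  forall x y, Q x -> Q y -> x <> y -> phi x y = c.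

(* One step of the standard proof of the infinite Ramsey theorem: pick a
   pivot of Y and keep the unbounded colour class of the later elements,
   coloured by their edge to the pivot. *)
Definition pivot (Y : set nat) := xget 0 Y.
Definition later (Y : set nat) := [set y | Y y /\ pivot Y < y].
Definition pivot_colour (Y : set nat) :=
  xget (phi 0 0) [set c | unbounded [set y | later Y y /\ phi (pivot Y) y = c]].
Definition refine (Y : set nat) :=
  [set y | later Y y /\ phi (pivot Y) y = pivot_colour Y].

Lemma pivot_in Y : unbounded Y -> Y (pivot Y).
Proof. by move=> uY; have [y [Yy _]] := uY 0; exact: xgetI Yy. Qed.

Lemma refine_unbounded Y : unbounded Y -> unbounded (refine Y).
Proof.
move=> uY; have uL : unbounded (later Y).
  move=> b; have [y [Yy hy]] := uY (maxn b (pivot Y).+1).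
  by exists y; move: hy; rewrite geq_max => /andP[hb hp].
have [c uc] := unbounded_colour_class (phi (pivot Y)) uL.
exact: (@xgetI _ (phi 0 0) [set c | unbounded _] c uc).
Qed.

Lemma refine_sub Y : refine Y `<=` Y.
Proof. by move=> y [[]]. Qed.

Section Chain.
Variable X : set nat.
Hypothesis X_unbounded : unbounded X.

Let Ys i := iter i refine X.
Let x i := pivot (Ys i).

Lemma chain_unbounded i : unbounded (Ys i).
Proof. by elim: i => [|i IH] //=; exact: refine_unbounded. Qed.

Lemma chain_sub i j : i <= j -> Ys j `<=` Ys i.
Proof.
elim: j => [|j IH]; first by rewrite leqn0 => /eqP ->.
rewrite leq_eqVlt => /orP[/eqP -> //|]; rewrite ltnS => /IH.
by move=> h; apply: subset_trans _ h; exact: refine_sub.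
Qed.

Lemma chain_pivot_in i : X (x i).
Proof. exact: chain_sub (leq0n i) _ (pivot_in (chain_unbounded i)). Qed.

Lemma chain_pivot_edge i j :
  i < j -> x i < x j /\ phi (x i) (x j) = pivot_colour (Ys i).
Proof.
move=> ij; have := chain_sub ij (pivot_in (chain_unbounded j)).
by move=> [[_ h1] h2].
Qed.

Lemma chain_pivot_ge i : i <= x i.
Proof.
elim: i => [|i IH] //; exact: leq_ltn_trans IH (chain_pivot_edge (ltnSn i)).1.
Qed.

End Chain.

Theorem ramsey (X : set nat) : unbounded X -> (forall x, X x -> 0 < x) ->
  exists c Q, [/\ Q `<=` X, unbounded Q & clique c Q].
Proof.
move=> uX posX.
pose x i := pivot (iter i refine X); pose cc i := pivot_colour (iter i refine X).
have [c uc] := unbounded_colour_class cc unboundedT.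
exists c, [set y | exists i, cc i = c /\ x i = y]; split.
- by move=> y [i [_ <-]]; exact: chain_pivot_in.
- move=> b; have [i [[_ ci] bi]] := uc b.
  by exists (x i); split; [exists i | exact: leq_trans bi (chain_pivot_ge uX i)].
- move=> y z [i [ci <-]] [j [cj <-]] neq.
  case: (ltngtP i j) => [ij|ji|ij]; last by case: neq; rewrite ij.
    by rewrite -ci; exact: (chain_pivot_edge uX ij).2.
  rewrite phi_sym; first by rewrite -cj; exact: (chain_pivot_edge uX ji).2.
  + exact: posX (chain_pivot_in uX _).
  + exact: posX (chain_pivot_in uX _).
  + exact/eqP.
Qed.

Definition good c x :=
  exists Q, [/\ Q x, unbounded Q, (forall y, Q y -> 0 < y) & clique c Q].

Lemma almost_all_good :
  exists b, forall x, 0 < x -> (forall c, ~ good c x) -> x < b.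
Proof.
have : ~ unbounded [set x | 0 < x /\ forall c, ~ good c x].
  move=> uB; have [c [Q [QB uQ cQ]]] := ramsey uB (fun x h => h.1).
  have [y [Qy _]] := uQ 0; apply: ((QB y Qy).2 c).
  by exists Q; split => // z /QB [].
by move=> /not_unboundedP [b Hb]; exists b => x x0 hx; exact: Hb.
Qed.

End InfiniteRamsey.

Definition count_upto (W : set nat) t := count (fun i => `[< W i >]) (iota 1 t).

Lemma count_upto_sub (W W' : set nat) t :
  W `<=` W' -> (count_upto W t <= count_upto W' t)%N.
Proof. by move=> sWW'; apply: sub_count => x /asboolP /sWW' /asboolP. Qed.

Section SparseSelection.
Local Open Scope nat_scope.

Lemma count_quadratic_range (s : nat -> nat) : (forall m, m * m <= s m) ->
  forall M t, 0 < M -> count_upto (range s) t <= t %/ M + M.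
Proof.
move=> sq M t M0; rewrite /count_upto -size_filter; set k := t %/ M + M.
have tk : t < k * k.
  apply: leq_trans (ltn_ceil t M0) _; apply: leq_mul; last exact: leq_addl.
  by rewrite /k -addn1 leq_add2l.
have -> : k = size (map s (iota 0 k)) by rewrite size_map size_iota.
apply: uniq_leq_size; first exact/filter_uniq/iota_uniq.
move=> y; rewrite mem_filter mem_iota => /andP[/asboolP [m _ <-] /andP[_ hy]].
apply: map_f; rewrite mem_iota leq0n add0n ltnNge; apply/negP => km.
have := leq_mul km km; have := sq m; lia.
Qed.

Definition slot m := logn 2 m.+1.

Lemma slot_unbounded n b : exists m, slot m = n /\ b <= m.
Proof.
have pos : 0 < b.*2.+1 * 2 ^ n by rewrite muln_gt0 expn_gt0.
exists (b.*2.+1 * 2 ^ n).-1; rewrite /slot prednK //; split.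
  by rewrite logn_Gauss ?pfactorK // coprime2n /= odd_double.
have : b.*2.+1 <= b.*2.+1 * 2 ^ n by rewrite leq_pmulr // expn_gt0.
rewrite -addnn; lia.
Qed.

Section Selection.
Variable Q : nat -> set nat.
Hypothesis Q_unbounded : forall n, unbounded (Q n).

Fixpoint select m :=
  if m is m'.+1 then above (Q (slot m)) (maxn (select m').+1 (m * m))
  else above (Q (slot 0)) 0.

Lemma select_in m : Q (slot m) (select m).
Proof. by case: m => [|m]; exact: (aboveP _ (Q_unbounded _)).1. Qed.

Lemma select_step m : select m < select m.+1 /\ m.+1 * m.+1 <= select m.+1.
Proof.
have [_] := aboveP (maxn (select m).+1 (m.+1 * m.+1)) (Q_unbounded (slot m.+1)).
by rewrite geq_max => /andP.
Qed.

Lemma select_sq m : m * m <= select m.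
Proof. by case: m => [|m] //; exact: (select_step m).2. Qed.

Lemma select_inj : injective select.
Proof.
apply/incn_inj/leq_mono/(homo_ltn ltn_trans) => m; exact: (select_step m).1.
Qed.

End Selection.

Definition sparse_tails (Q : nat -> set nat) (S : set nat) (T : nat -> set nat) :=
  [/\ forall n, T n `<=` Q n, forall n, T n `<=` S, forall n, unbounded (T n),
      forall n n' x, T n x -> T n' x -> n = n' &
      forall M t, 0 < M -> count_upto S t <= t %/ M + M].

Lemma sparse_selection (Q : nat -> set nat) : (forall n, unbounded (Q n)) ->
  exists S T, sparse_tails Q S T.
Proof.
move=> uQ; pose T n := select Q @` [set m | slot m = n].
exists (range (select Q)), T; split.
- by move=> n x [m <- <-]; exact: select_in.
- by move=> n x [m _ <-]; exists m.
- move=> n b; have [m [mn bm]] := slot_unbounded n b.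
  exists (select Q m); split; first by exists m.
  have := select_sq uQ m; nia.
- by move=> n n' x [m <- <-] [m' <- /(select_inj uQ) ->].
- exact/count_quadratic_range/select_sq.
Qed.

End SparseSelection.

Lemma count_bounded (p : pred nat) b t :
  (forall x, p x -> x < b)%N -> (count p (iota 1 t) <= b)%N.
Proof.
move=> pb; rewrite -size_filter.
have sub : {subset [seq x <- iota 1 t | p x] <= iota 0 b}.
  by move=> y; rewrite mem_filter => /andP[/pb yb _]; rewrite mem_iota.
by have := uniq_leq_size (filter_uniq _ (iota_uniq 1 t)) sub; rewrite size_iota.
Qed.

Lemma count_cover r (s : seq nat) (P J : pred nat) (F G : 'I_r -> pred nat) :
  (forall x, P x -> J x || [exists c, F c x || G c x]) ->
  (count P s <= count J s + \sum_(c < r) (count (F c) s + count (G c) s))%N.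
Proof.
move=> H; elim: s => [|x s IH] //=.
have -> : (\sum_(c < r) (count (F c) (x :: s) + count (G c) (x :: s)) =
   \sum_(c < r) (F c x + G c x) + \sum_(c < r) (count (F c) s + count (G c) s))%N.
  by rewrite -big_split; apply: eq_bigr => c _ /=; lia.
have : (P x <= J x + \sum_(c < r) (F c x + G c x))%N.
  case Px: (P x) => //; have := H x Px; case: (J x) => //= /existsP [c hc].
  rewrite (bigD1 c) //=; case: (F c x) hc => /=; case: (G c x) => //= _; lia.
lia.
Qed.

Lemma covering_count r (b M t : nat) (S W : 'I_r -> set nat) : (0 < M)%N ->
  (forall x, (0 < x)%N -> (b <= x)%N -> exists c, S c x \/ W c x) ->
  (forall c, count_upto (S c) t <= t %/ M + M)%N ->
  (t <= (b + r * M) + r * (t %/ M) + \sum_(c < r) count_upto (W c) t)%N.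
Proof.
move=> M0 cover sparseS.
have hcover : (count (fun x => 0 < x) (iota 1 t) <=
    count (fun x => x < b) (iota 1 t) +
    \sum_(c < r) (count_upto (S c) t + count_upto (W c) t))%N.
  apply: count_cover => x x0; case: (ltnP x b) => //= bx.
  have [c hc] := cover x x0 bx; apply/existsP; exists c.
  by case: hc => h; apply/orP; [left|right]; apply/asboolP.
have count_pos : count (fun x => 0 < x)%N (iota 1 t) = t.
  rewrite -[RHS](size_iota 1 t) -count_predT; apply: eq_in_count => x.
  by rewrite mem_iota => /andP[].
have hS : (\sum_(c < r) count_upto (S c) t <= r * (t %/ M) + r * M)%N.
  apply: leq_trans (_ : \sum_(c < r) (t %/ M + M) <= _)%N.
    by apply: leq_sum => c _; exact: sparseS.
  by rewrite big_const_ord iter_addn_0 mulnC mulnDr.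
have hb := @count_bounded (fun x => x < b)%N b t (fun x h => h).
rewrite big_split /= count_pos in hcover; apply: (leq_trans hcover).
by rewrite addnA leq_add2r -addnA [r * M + _]addnC leq_add.
Qed.

Section Density.
Variable R : realType.
Local Open Scope ring_scope.

Definition density_ge (a : R) (W : set nat) := forall eps : R, 0 < eps ->
  forall N, exists t, (N <= t)%N /\ a - eps <= (count_upto W t)%:R / t%:R.

Lemma density_ge_sub (a : R) (W W' : set nat) :
  W `<=` W' -> density_ge a W -> density_ge a W'.
Proof.
move=> sWW' dW eps eps0 N; have [t [Nt ht]] := dW eps eps0 N.
exists t; split => //; apply: le_trans ht _.
by rewrite ler_wpM2r ?invr_ge0 // ler_nat count_upto_sub.
Qed.

Lemma upper_density_ge (W : set nat) (a : R) :
  density_ge a W -> (a%:E <= upper_density R W)%E.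
Proof.
move=> H; rewrite /upper_density /limn_esup /limf_esup.
apply: le_ereal_inf_tmp => _ [V [N _ HN] <-].
apply/lee_subgt0Pr => eps eps0; have [t [Nt ht]] := H eps eps0 N.
apply: le_ereal_sup_tmp; eexists; first by exists t; [exact: HN|reflexivity].
rewrite -big_mkcond sum1_count /index_iota subSS subn0.
by rewrite -EFinD lee_fin.
Qed.

Lemma density_ge_unbounded (a : R) (W : set nat) :
  0 < a -> density_ge a W -> unbounded W.
Proof.
move=> a0 dW; apply: contrapT => /not_unboundedP [b Wb].
have [|t [Nt ht]] := dW (a / 2) _ (Num.Def.archi_bound (2 * b%:R / a)).+1.
  by rewrite divr_gt0.
have t0 : (0 < t%:R :> R) by rewrite ltr0n (leq_trans _ Nt).
have tb : 2 * b%:R / a < t%:R.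
  apply: lt_le_trans (archi_boundP _) _.
    by apply: divr_ge0; [exact: mulr_ge0 | exact: ltW].
  by rewrite ler_nat ltnW.
have cb : (count_upto W t)%:R <= b%:R :> R.
  by rewrite ler_nat count_bounded // => x /asboolP /Wb.
move: ht tb; rewrite ler_pdivlMr // ltr_pdivrMr // => ht tb.
have : (a - a / 2) * t%:R <= b%:R by apply: le_trans cb.
have -> : a - a / 2 = a / 2 by field.
nra.
Qed.

Lemma share_bound (t K r M w : nat) (eps : R) :
  (0 < r)%N -> (0 < t)%N -> (0 < M)%N -> 0 < eps ->
  (t <= K + r * (t %/ M) + r * w)%N ->
  2 <= eps * M%:R -> 2 * K%:R <= eps * r%:R * t%:R ->
  (r%:R)^-1 - eps <= w%:R / t%:R.
Proof.
move=> r0 t0 M0 eps0 h hM ht.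
have rR : (0 < r%:R :> R) by rewrite ltr0n.
have tR : (0 < t%:R :> R) by rewrite ltr0n.
have qM : ((t %/ M)%:R * M%:R <= t%:R :> R) by rewrite -natrM ler_nat leq_divM.
have q0 : (0 <= (t %/ M)%:R :> R) by [].
have {}h : t%:R <= K%:R + r%:R * (t %/ M)%:R + r%:R * w%:R :> R.
  by move: h; rewrite -(ler_nat R) !(natrD, natrM).
have hq : 2 * (t %/ M)%:R <= eps * t%:R by nra.
have key : t%:R - eps * r%:R * t%:R <= r%:R * w%:R by nra.
have -> : (r%:R)^-1 - eps = (t%:R - eps * r%:R * t%:R) / (r%:R * t%:R).
  by field; rewrite !pnatr_eq0 -!lt0n t0 r0.
have -> : w%:R / t%:R = (r%:R * w%:R) / (r%:R * t%:R) :> R.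
  by field; rewrite !pnatr_eq0 -!lt0n t0 r0.
by rewrite ler_pM2r // invr_gt0 mulr_gt0.
Qed.

(* If the r sets W c together cover [1, t] up to an error K(M) + r (t / M)
   for each M, then one of them has upper density at least 1 / r: for
   unboundedly many t the same W c is the largest of them. *)
Lemma colour_with_density (r : nat) (W : 'I_r -> set nat) : (0 < r)%N ->
  (forall M, (0 < M)%N -> exists K, forall t,
     (t <= K + r * (t %/ M) + \sum_(c < r) count_upto (W c) t)%N) ->
  exists c, density_ge (r%:R^-1) (W c).
Proof.
move=> r0 cover; pose best t := [arg max_(c > Ordinal r0) count_upto (W c) t].
have best_max t :
    (\sum_(c < r) count_upto (W c) t <= r * count_upto (W (best t)) t)%N.
  rewrite /best; case: arg_maxnP => //= cm _ Hm.
  apply: leq_trans (_ : \sum_(c < r) count_upto (W cm) t <= _)%N.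
    by apply: leq_sum => c _; exact: Hm.
  by rewrite big_const_ord iter_addn_0 mulnC.
have [c uc] := unbounded_colour_class best unboundedT.
exists c => eps eps0 N; pose M := (Num.Def.archi_bound (eps^-1 * 2)).+1.
have [K HK] := cover M isT.
have hM : 2 <= eps * M%:R.
  rewrite -ler_pdivrMl //; apply/ltW/(lt_le_trans (archi_boundP _)).
    by rewrite mulr_ge0 // invr_ge0 ltW.
  by rewrite ler_nat.
have er : 0 < eps * r%:R by rewrite mulr_gt0 // ltr0n.
pose T0 := Num.Def.archi_bound ((eps * r%:R)^-1 * (2 * K%:R)).
have [t [[_ bt] tN]] := uc (maxn N (maxn T0 1)).
move: tN; rewrite !geq_max => /and3P[Nt T0t t0].
exists t; split => //; apply: (@share_bound t K r M _ eps r0 t0 isT eps0 _ hM).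
  by apply: leq_trans (HK t) _; rewrite leq_add2l -bt.
rewrite -ler_pdivrMl //; apply/ltW/(lt_le_trans (archi_boundP _)).
  by rewrite mulr_ge0 // invr_ge0 ltW.
by rewrite ler_nat.
Qed.

End Density.

Section CliqueSystem.
Variables (R : realType) (r : nat) (phi : nat -> nat -> 'I_r).
Hypotheses (phi_sym : edge_colouring phi) (r_gt0 : (0 < r)%N).

(* Each component of the graph will be embedded into one {w} u T w. *)
Definition clique_system c (W : set nat) (T : nat -> set nat) :=
  [/\ forall w, W w -> (0 < w)%N,
      forall w, W w -> [/\ unbounded (T w), forall x, T w x -> (0 < x)%N
                         & clique phi c (w |` T w)],
      forall w w' x, T w x -> T w' x -> w = w'
    & forall w w' x, W w -> T w' x -> x <> w].

Lemma good_witness c w : exists Q : set nat, unbounded Q /\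
  (good phi c w -> [/\ Q w, forall y, Q y -> (0 < y)%N & clique phi c Q]).
Proof.
case: (pselect (good phi c w)) => [[Q [Qw uQ pQ cQ]]|ng]; first by exists Q.
by exists [set n | (0 < n)%N]; split => [b|/ng//]; exists b.+1.
Qed.

(* Main colouring lemma: some colour admits a clique system whose roots have
   upper density at least 1 / r.  The roots of colour c are the c-good
   integers outside the sparse union S c of the tails. *)
Theorem dense_clique_system :
  exists c W T, clique_system c W T /\ density_ge (r%:R^-1 : R) W.
Proof.
have [Q HQ] := choice (fun cw : 'I_r * nat => good_witness cw.1 cw.2).
have /choice [ST HST] : forall c, exists ST : set nat * (nat -> set nat),
    sparse_tails (fun n => Q (c, n)) ST.1 ST.2.
  move=> c; have [S [T HS]] := sparse_selection (fun n => (HQ (c, n)).1).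
  by exists (S, T).
have [b Hb] := almost_all_good phi_sym.
pose W c := [set x | good phi c x /\ ~ (ST c).1 x].
have [c dW] : exists c, density_ge (r%:R^-1 : R) (W c).
  apply: (colour_with_density R r_gt0) => M M0; exists (b + r * M) => t.
  apply: (covering_count (S := fun c => (ST c).1)) => // [x x0 bx|c].
    have [gx|/existsNP [c /contrapT gc]] := pselect (forall c, ~ good phi c x).
      by have := Hb x x0 gx; rewrite ltnNge bx.
    by exists c; case: (pselect ((ST c).1 x)) => hS; [left | right].
  by have [_ _ _ _] := HST c; apply.
exists c, (W c), (ST c).2; split => //.
have [TQ TS uT Tdisj _] := HST c; split.
- by move=> w [[Q' [Qw _ pQ _]] _]; exact: pQ Qw.
- move=> w [gw _]; have [Qw pQ cQ] := (HQ (c, w)).2 gw; split => //.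
    by move=> x /TQ /pQ.
  by move=> x y hx hy; apply: cQ; [case: hx => [->|/TQ] | case: hy => [->|/TQ]].
- exact: Tdisj.
- by move=> w w' x [_ nS] /TS Sx xw; apply: nS; rewrite -xw.
Qed.

End CliqueSystem.

(* Two countable infinite sets are equinumerous (Cantor-Bernstein). *)
Lemma countable_infinite_card_eq T U (A : set T) (B : set U) :
  countable A -> countable B -> infinite_set A -> infinite_set B -> (A #= B)%card.
Proof.
move=> cA cB /infiniteP iA /infiniteP iB.
rewrite card_eq_le; apply/andP.
by split; [apply: card_le_trans iB|apply: card_le_trans iA].
Qed.

Section Components.
Variables (V : countType) (e : V -> V -> bool).
Hypothesis sg : simple_graph e.

Definition component (v : V) := [set w | gconnected e v w].

Lemma gconnected_trans u v w :
  gconnected e u v -> gconnected e v w -> gconnected e u w.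
Proof. by elim=> [//|a b c eab _ IH] /IH; exact: gconn_step. Qed.

Lemma gconnected_sym u v : gconnected e u v -> gconnected e v u.
Proof.
elim=> [a|a b c eab _ IH]; first exact: gconn_refl.
apply: gconnected_trans IH (gconn_step _ (gconn_refl e a)).
by rewrite sg.1.
Qed.

Lemma component_connected u v : gconnected e u v -> component u = component v.
Proof.
move=> uv; apply/seteqP; split => w /=; last exact: gconnected_trans.
exact/gconnected_trans/gconnected_sym.
Qed.

Lemma component_edge u v : e u v -> component u = component v.
Proof. by move=> euv; apply/component_connected/(gconn_step euv)/gconn_refl. Qed.

Lemma components_countable : countable (components e).
Proof.
apply: card_le_trans (countableP [set: V]).
apply: card_le_trans (card_image_le component setT).
by apply: subset_card_le => _ [v ->]; exists v.
Qed.

Definition leader (v : V) := xget v (component v).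

Lemma component_leader v : component (leader v) = component v.
Proof.
apply/esym/component_connected.
by apply: (@xgetI _ v (component v) v); exact: gconn_refl.
Qed.

Lemma leader_eq u v : component u = component v -> leader u = leader v.
Proof.
move=> cuv; rewrite /leader cuv /xget; case: pselect => // nP; exfalso.
by apply: nP; exists v; apply/asboolP; exact: gconn_refl.
Qed.

End Components.

Section Embedding.
Variables (V : countType) (e : V -> V -> bool).
Variables (r : nat) (phi : nat -> nat -> 'I_r).
Variables (c : 'I_r) (W : set nat) (T : nat -> set nat).
Hypotheses (sg : simple_graph e) (sys : clique_system phi c W T).
(* sigma assigns distinct roots to the components, g w enumerates T w. *)
Variables (sigma : set V -> nat) (g : nat -> nat -> nat).
Hypotheses (sigma_bij : set_bij (components e) W sigma)
  (g_enum : forall w, W w -> (forall n, T w (g w n)) /\ injective (g w)).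

Definition root_of (v : V) := sigma (component e v).
Definition embed (v : V) :=
  if v == leader e v then root_of v else g (root_of v) (pickle v).

Lemma root_of_in v : W (root_of v).
Proof. by have [sfun _ _] := sigma_bij; apply: sfun; exists v. Qed.

Lemma embed_tail v : v != leader e v -> T (root_of v) (embed v).
Proof. by rewrite /embed => /negPf ->; exact: (g_enum (root_of_in v)).1. Qed.

Lemma embed_root v : v = leader e v -> embed v = root_of v.
Proof. by rewrite /embed => <-; rewrite eqxx. Qed.

Lemma embed_inj : injective embed.
Proof.
have [_ _ Tdisj rootNtail] := sys.
have [_ sinj _] := sigma_bij.
have root_inj u v : root_of u = root_of v -> component e u = component e v.
  by move=> h; apply: sinj h; apply/mem_set; [exists u | exists v].
move=> u v.
case: (eqVneq u (leader e u)) => hu; case: (eqVneq v (leader e v)) => hv.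
- rewrite !embed_root // => /root_inj cuv.
  by rewrite hu hv; exact: leader_eq.
- by rewrite (embed_root hu) => h; have := embed_tail hv; rewrite -h;
    move/(rootNtail _ _ _ (root_of_in u)).
- by rewrite (embed_root hv) => h; have := embed_tail hu; rewrite h;
    move/(rootNtail _ _ _ (root_of_in v)).
- move=> h; have := embed_tail hu; rewrite h => /Tdisj /(_ (embed_tail hv)) ruv.
  move: h; rewrite /embed (negPf hu) (negPf hv) ruv.
  by move/(g_enum (root_of_in v)).2/(pcan_inj (@pickleK V)).
Qed.

Lemma embed_in v : (root_of v |` T (root_of v)) (embed v).
Proof.
case: (eqVneq v (leader e v)) => hv; first by left; exact: embed_root.
by right; exact: embed_tail.
Qed.

Lemma embed_copy : is_copy e embed.
Proof.
split; first exact: embed_inj.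
have [Wpos Tprop _ _] := sys; move=> v; case: (embed_in v) => [->|].
  exact/Wpos/root_of_in.
by have [_ Tpos _] := Tprop _ (root_of_in v); exact: Tpos.
Qed.

(* Edges stay inside a component, whose image lies in one clique. *)
Lemma embed_monochromatic : monochromatic e phi embed.
Proof.
exists c => u v euv; have [_ Tprop _ _] := sys.
have [_ _ cl] := Tprop _ (root_of_in u).
apply: cl; first exact: embed_in.
  by rewrite /root_of (component_edge sg euv); exact: embed_in.
move=> /embed_inj uv; move: euv; rewrite uv.
by have := sg.2 v; case: (e v v).
Qed.

Lemma embed_range : W `<=` range embed.
Proof.
have [_ _ ssurj] := sigma_bij; move=> w /ssurj [_ [v ->] <-].
exists (leader e v) => //; rewrite embed_root /root_of ?component_leader //.
exact/leader_eq/esym/component_leader.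
Qed.

End Embedding.

Lemma clique_system_embedding (V : countType) (e : V -> V -> bool) r
    (phi : nat -> nat -> 'I_r) c W T :
  simple_graph e -> infinite_set (components e) -> unbounded W ->
  clique_system phi c W T ->
  exists f, [/\ is_copy e f, monochromatic e phi f & W `<=` range f].
Proof.
move=> sg inf uW sys.
have [sigma sigma_bij] : exists sigma : set V -> nat,
    set_bij (components e) W sigma.
  apply/card_set_bijP; apply: countable_infinite_card_eq inf _.
  - exact: components_countable.
  - exact: countableP.
  - exact: unbounded_infinite.
have /choice [g g_enum] : forall w, exists g : nat -> nat,
    W w -> (forall n, T w (g n)) /\ injective g.
  move=> w; case: (pselect (W w)) => Ww; last by exists id.
  have [_ Tprop _ _] := sys; have [uT _ _] := Tprop w Ww.
  by have [h hh] := unbounded_enum uT; exists h.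
exists (embed e sigma g); split.
- exact: (@embed_copy V e r phi c W T sys sigma g sigma_bij g_enum).
- exact: (@embed_monochromatic V e r phi c W T sg sys sigma g sigma_bij g_enum).
- exact: (@embed_range V e W sg sigma g sigma_bij).
Qed.

Local Open Scope ring_scope.

Theorem mainTheorem10 (R : realType) (V : countType) (e : V -> V -> bool)
  (r : nat) :
  (0 < r)%N ->
  simple_graph e ->
  infinite_set (components e) ->
  (((r%:R)^-1 : R)%:E <= Rd R e r)%E.
Proof.
move=> r_gt0 sg inf; apply: le_ereal_inf_tmp => _ [phi phi_sym <-].
have [c [W [T [sys dW]]]] := dense_clique_system R phi_sym r_gt0.
have uW : unbounded W by apply: density_ge_unbounded dW; rewrite invr_gt0 ltr0n.
have [f [copy mono Wf]] := clique_system_embedding sg inf uW sys.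
apply: le_ereal_sup_tmp; exists (upper_density R (range f)); first by exists f.
exact/upper_density_ge/(density_ge_sub Wf).
Qed.
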